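(* The chronology $\ll_C$ on $\bar M$ is weakly distinguishing: for $\bar P,\bar Q\in\bar M$, one has $I^+_C(\bar P)=I^+_C(\bar Q)$ and $I^-_C(\bar P)=I^-_C(\bar Q)$ if and only if $\bar P=\bar Q$.
   Context: Let $M$ be a strongly causal spacetime (a time-oriented Lorentzian manifold in which every point has a neighbourhood that no non-spacelike curve enters more than once). $I^\pm(p)$ denotes the chronological future/past of $p\in M$, and $I^\pm(S)=\bigcup_{s\in S}I^\pm(s)$. A past-set is a set $I^-(S)$ with $S\subset M$. An IP is a nonempty past-set that is not the union of two proper subsets which are past-sets. IFs are defined dually. For an IP $P$, $f(P)=I^+(\{x:P\subset I^-(x)\})$. For an IF $P^*$, $p(P^* )=I^-(\{x:P^*\subset I^+(x)\})$. $R_{pf}$ is the set of pairs $(P,Q^* )$ (with $P$ an IP and $Q^*$ an IF) such that both of the following hold: - $Q^*$ is a maximal IF (under inclusion) contained in $f(P)$; - $P$ is a maximal IP contained in $p(Q^* )$. $\bar M$ is the set of pairs $\bar P=(P,P^* )$ such that one of the following holds: - $(P,P^* )\in R_{pf}$; - $P=\emptyset$ and $P^*$ is an IF occurring in no pair of $R_{pf}$; - $P^*=\emptyset$ and $P$ is an IP occurring in no pair of $R_{pf}$. $M$ is identified with its image under the injection $p\mapsto(I^-(p),I^+(p))\in\bar M$. On $\bar M$, $\bar P\ll_C\bar Q$ if and only if $P^*\cap Q\neq\emptyset$. For $\bar P\in\bar M$, $I^+_C(\bar P)=\{\bar Q\in\bar M:\bar P\ll_C\bar Q\}$ and $I^-_C(\bar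 P)=\{\bar Q\in\bar M:\bar Q\ll_C\bar P\}$. *)

Set Implicit Arguments.

Definition set (T : Type) := T -> Prop.
Definition set0 {T : Type} : set T := fun _ => False.
Definition subset {T : Type} (A B : set T) : Prop := forall x, A x -> B x.
Definition proper {T : Type} (A B : set T) : Prop := subset A B /\ A <> B.

Section Chron.
Variable T : Type.
Variable ll : T -> T -> Prop.

Definition Ifut (S : set T) : set T := fun x => exists s, S s /\ ll s x.
Definition Ipast (S : set T) : set T := fun x => exists s, S s /\ ll x s.
Definition Ifut1 (p : T) : set T := fun x => ll p x.
Definition Ipast1 (p : T) : set T := fun x => ll x p.

Definition past_set (A : set T) : Prop := exists S, A = Ipast S.
Definition future_set (A : set T) : Prop := exists S, A = Ifut S.

Definition IP (P : set T) : Prop :=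
  (exists x, P x) /\ past_set P /\
  ~ (exists A B, past_set A /\ past_set B /\ proper A P /\ proper B P /\
       P = (fun x => A x \/ B x)).
Definition IF (P : set T) : Prop :=
  (exists x, P x) /\ future_set P /\
  ~ (exists A B, future_set A /\ future_set B /\ proper A P /\ proper B P /\
       P = (fun x => A x \/ B x)).

Definition fP (P : set T) : set T := Ifut (fun x => subset P (Ipast1 x)).
Definition pF (F : set T) : set T := Ipast (fun x => subset F (Ifut1 x)).

Definition maximal_IF_in (Q C : set T) : Prop :=
  IF Q /\ subset Q C /\ forall Q', IF Q' -> subset Q' C -> subset Q Q' -> Q' = Q.
Definition maximal_IP_in (P C : set T) : Prop :=
  IP P /\ subset P C /\ forall P', IP P' -> subset P' C -> subset P P' -> P' = P.

Definition Rpf (P Q : set T) : Prop :=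
  maximal_IF_in Q (fP P) /\ maximal_IP_in P (pF Q).

Definition Mbar (X : set T * set T) : Prop :=
  let (P, F) := X in
  Rpf P F
  \/ (P = set0 /\ IF F /\ ~ (exists P', Rpf P' F))
  \/ (F = set0 /\ IP P /\ ~ (exists F', Rpf P F')).

Definition llC (X Y : set T * set T) : Prop :=
  exists x, snd X x /\ fst Y x.

Definition IplusC (X : set T * set T) : set (set T * set T) :=
  fun Y => Mbar Y /\ llC X Y.
Definition IminusC (X : set T * set T) : set (set T * set T) :=
  fun Y => Mbar Y /\ llC Y X.

End Chron.

(* Every component of an element of Mbar is an open past or future set:
   it coincides with its own chronological past (resp. future), by
   transitivity and interpolation of <<.  Hence a point p of M lies in the
   IP-component of X exactly when p <<_C X, i.e. when the embedded point
   belongs to I^-_C(X); dually for the IF-component and I^+_C(X).  So the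
   two chronological cones of X determine both of its components. *)
From Stdlib Require Import FunctionalExtensionality PropExtensionality.

Lemma set_ext (T : Type) (A B : set T) : (forall x, A x <-> B x) -> A = B.
Proof.
  intros HAB; apply functional_extensionality; intros x.
  apply propositional_extensionality, HAB.
Qed.

Section OpenSets.
Variable T : Type.
Variable ll : T -> T -> Prop.
Hypothesis ll_trans : forall x y z, ll x y -> ll y z -> ll x z.
Hypothesis ll_interp : forall x z, ll x z -> exists y, ll x y /\ ll y z.

Lemma Ipast_idem (S : set T) : Ipast ll (Ipast ll S) = Ipast ll S.
Proof.
  apply set_ext; intros p; split.
  - intros [x [[s [Hs Hxs]] Hpx]]; exists s; split; eauto.
  - intros [s [Hs Hps]].
    destruct (ll_interp _ _ Hps) as [y [Hpy Hys]].
    exists y; split; [exists s; split |]; assumption.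
Qed.

Lemma Ifut_idem (S : set T) : Ifut ll (Ifut ll S) = Ifut ll S.
Proof.
  apply set_ext; intros p; split.
  - intros [x [[s [Hs Hsx]] Hxp]]; exists s; split; eauto.
  - intros [s [Hs Hsp]].
    destruct (ll_interp _ _ Hsp) as [y [Hsy Hyp]].
    exists y; split; [exists s; split |]; assumption.
Qed.

Lemma past_set_Ipast (A : set T) : past_set ll A -> Ipast ll A = A.
Proof. intros [S ->]; apply Ipast_idem. Qed.

Lemma future_set_Ifut (A : set T) : future_set ll A -> Ifut ll A = A.
Proof. intros [S ->]; apply Ifut_idem. Qed.

Lemma Ipast_set0 : Ipast ll set0 = set0.
Proof. apply set_ext; intros p; split; [intros [s [[] _]] | intros []]. Qed.

Lemma Ifut_set0 : Ifut ll set0 = set0.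
Proof. apply set_ext; intros p; split; [intros [s [[] _]] | intros []]. Qed.

Lemma Mbar_open (X : set T * set T) :
  Mbar ll X -> Ipast ll (fst X) = fst X /\ Ifut ll (snd X) = snd X.
Proof.
  destruct X as [P F];
    unfold Mbar, Rpf, maximal_IF_in, maximal_IP_in, IF, IP; simpl.
  intros [[[[_ [HF _]] _] [[_ [HP _]] _]]
         | [[-> [[_ [HF _]] _]] | [-> [[_ [HP _]] _]]]].
  - split; [apply past_set_Ipast | apply future_set_Ifut]; assumption.
  - split; [apply Ipast_set0 | apply future_set_Ifut]; assumption.
  - split; [apply past_set_Ipast | apply Ifut_set0]; assumption.
Qed.

Hypothesis M_in_Mbar : forall p, Mbar ll (Ipast1 ll p, Ifut1 ll p).

Lemma IminusC_point (X : set T * set T) (p : T) :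
  Mbar ll X -> (IminusC ll X (Ipast1 ll p, Ifut1 ll p) <-> fst X p).
Proof.
  intros HX; destruct (Mbar_open _ HX) as [HP _].
  rewrite <- HP; split.
  - intros [_ [x [Hpx HXx]]]; exists x; split; assumption.
  - intros [x [HXx Hpx]]; split; [apply M_in_Mbar | exists x; split; assumption].
Qed.

Lemma IplusC_point (X : set T * set T) (p : T) :
  Mbar ll X -> (IplusC ll X (Ipast1 ll p, Ifut1 ll p) <-> snd X p).
Proof.
  intros HX; destruct (Mbar_open _ HX) as [_ HF].
  rewrite <- HF; split.
  - intros [_ [x [HXx Hxp]]]; exists x; split; assumption.
  - intros [x [HXx Hxp]]; split; [apply M_in_Mbar | exists x; split; assumption].
Qed.

End OpenSets.

Theorem theorem4 (T : Type) (ll : T -> T -> Prop)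
  (ll_trans : forall x y z, ll x y -> ll y z -> ll x z)
  (ll_interp : forall x z, ll x z -> exists y, ll x y /\ ll y z)
  (M_in_Mbar : forall p, Mbar ll (Ipast1 ll p, Ifut1 ll p))
  (M_inj : forall p q, (Ipast1 ll p, Ifut1 ll p) = (Ipast1 ll q, Ifut1 ll q) -> p = q)
  (X Y : set T * set T) (HX : Mbar ll X) (HY : Mbar ll Y) :
  (IplusC ll X = IplusC ll Y /\ IminusC ll X = IminusC ll Y) <-> X = Y.
Proof.
  split; [| intros ->; split; reflexivity].
  intros [Hplus Hminus].
  pose proof (@IminusC_point T ll ll_trans ll_interp M_in_Mbar) as past_of_cone.
  pose proof (@IplusC_point T ll ll_trans ll_interp M_in_Mbar) as fut_of_cone.
  destruct X as [P F], Y as [Q G]; f_equal; apply set_ext; intros p.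
  - rewrite <- (past_of_cone _ p HX), <- (past_of_cone _ p HY), Hminus.
    reflexivity.
  - rewrite <- (fut_of_cone _ p HX), <- (fut_of_cone _ p HY), Hplus.
    reflexivity.
Qed.
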